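(* Let $Q\in\mathbb{R}^{n\times n}$ be symmetric nonsingular with eigenvalues $\lambda_1\ge\dots\ge\lambda_{n-1}>0>\lambda_n$ and orthonormal eigenvectors $u_1,\dots,u_n$ ($Qu_i=\lambda_iu_i$), let $\mathcal{C_L}=\{x: x^TQx\le0,\ x^TQu_n\le0\}$, and let $A\in\mathbb{R}^{n\times n}$. Then $\mathcal{C_L}$ (equivalently, $-\mathcal{C_L}$) is an invariant set for the continuous system $\dot x(t)=Ax(t)$ (i.e., $e^{At}\mathcal{C_L}\subseteq\mathcal{C_L}$ for all $t\ge0$) if and only if there exists $\eta\in\mathbb{R}$ such that $A^TQ+QA-\eta Q\preceq0$.
   Context: $\preceq0$ denotes negative semidefiniteness. *)

(* real matrices are represented as functions nat -> nat -> R,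
   vectors as nat -> R; only indices < n are meaningful. *)
From Stdlib Require Import Reals Lra Lia Arith Factorial.
Open Scope R_scope.

Definition Vec := nat -> R.
Definition Mat := nat -> nat -> R.

Fixpoint rsum (n : nat) (f : nat -> R) : R :=
  match n with
  | O => 0
  | S m => rsum m f + f m
  end.

Definition dot (n : nat) (x y : Vec) : R := rsum n (fun i => x i * y i).
Definition mvec (n : nat) (A : Mat) (x : Vec) : Vec :=
  fun i => rsum n (fun k => A i k * x k).
Definition mmul (n : nat) (A B : Mat) : Mat :=
  fun i j => rsum n (fun k => A i k * B k j).
Definition trmx (A : Mat) : Mat := fun i j => A j i.
Definition madd (A B : Mat) : Mat := fun i j => A i j + B i j.
Definition mscale (c : R) (A : Mat) : Mat := fun i j => c * A i j.
Definition idmx : Mat := fun i j => if Nat.eqb i j then 1 else 0.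
Definition vopp (x : Vec) : Vec := fun i => - x i.

Definition quad (n : nat) (M : Mat) (x : Vec) : R := dot n x (mvec n M x).

Definition symmetric (n : nat) (M : Mat) : Prop :=
  forall i j, (i < n)%nat -> (j < n)%nat -> M i j = M j i.

Definition nonsingular (n : nat) (M : Mat) : Prop :=
  forall x : Vec, (forall i, (i < n)%nat -> mvec n M x i = 0) ->
                  forall i, (i < n)%nat -> x i = 0.

Definition nsd (n : nat) (M : Mat) : Prop := forall x : Vec, quad n M x <= 0.

Fixpoint mpow (n : nat) (A : Mat) (k : nat) : Mat :=
  match k with
  | O => idmx
  | S k' => mmul n A (mpow n A k')
  end.

Definition expm_partial (n : nat) (A : Mat) (t : R) (N : nat) : Mat :=
  fun i j => rsum (S N) (fun k => t ^ k / INR (Factorial.fact k) * mpow n A k i j).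

Definition is_expm (n : nat) (A : Mat) (t : R) (E : Mat) : Prop :=
  forall i j, (i < n)%nat -> (j < n)%nat ->
    Un_cv (fun N => expm_partial n A t N i j) (E i j).

Definition invariant_cont (n : nat) (A : Mat) (S : Vec -> Prop) : Prop :=
  forall t : R, 0 <= t -> forall E : Mat, is_expm n A t E ->
    forall x : Vec, S x -> S (mvec n E x).

Definition CL (n : nat) (Q : Mat) (un : Vec) (x : Vec) : Prop :=
  quad n Q x <= 0 /\ dot n x (mvec n Q un) <= 0.

(* Eigen-decomposition hypothesis (0-indexed): lam 0 >= ... >= lam (n-2) > 0 > lam (n-1),
   u 0, ..., u (n-1) orthonormal with Q u_i = lam_i u_i. *)
Definition lorentz_eigen (n : nat) (Q : Mat) (lam : nat -> R) (u : nat -> Vec) : Prop :=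
  (forall i j, (i < n)%nat -> (j < n)%nat ->
     dot n (u i) (u j) = if Nat.eqb i j then 1 else 0) /\
  (forall i k, (i < n)%nat -> (k < n)%nat -> mvec n Q (u i) k = lam i * u i k) /\
  (forall i, (S i < n)%nat -> lam (S i) <= lam i) /\
  (forall i, (i < n - 1)%nat -> 0 < lam i) /\
  lam (n - 1)%nat < 0.

From Stdlib Require Import Reals Lra Lia Arith Factorial Classical FunctionalExtensionality.
From Coquelicot Require Import Coquelicot.
From mathcomp Require all_boot all_algebra Rstruct.
Open Scope R_scope.

(* Put M = A^T Q + Q A, so that (x^T Q x)' = x^T M x along x' = A x.
   If M - eta Q <= 0, then e^{-eta t} x(t)^T Q x(t) is nonincreasing, so trajectories
   stay in {x^T Q x <= 0}.  On that set the linear form x^T Q u_n vanishes only at 0,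
   which a nonzero trajectory never reaches, so by the intermediate value theorem its
   sign is preserved as well.  Conversely, invariance of C_L (and hence of -C_L) gives
   x^T M x <= 0 on the whole null cone x^T Q x = 0, by differentiating at t = 0; as Q
   is indefinite, an S-lemma argument then yields eta. *)

Lemma rsum_ext n f g : (forall i, (i < n)%nat -> f i = g i) -> rsum n f = rsum n g.
Proof.
  induction n as [|n IH]; intros H; simpl; [reflexivity|].
  rewrite IH, H by first [lia | intros; apply H; lia]. reflexivity.
Qed.

Lemma rsum_add n f g : rsum n (fun i => f i + g i) = rsum n f + rsum n g.
Proof. induction n; simpl; [lra|]. rewrite IHn. lra. Qed.

Lemma rsum_mult_l n c f : rsum n (fun i => c * f i) = c * rsum n f.
Proof. induction n; simpl; [lra|]. rewrite IHn. lra. Qed.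

Lemma rsum_mult_r n c f : rsum n (fun i => f i * c) = rsum n f * c.
Proof. induction n; simpl; [lra|]. rewrite IHn. lra. Qed.

Lemma rsum_0 n f : (forall i, (i < n)%nat -> f i = 0) -> rsum n f = 0.
Proof.
  induction n as [|n IH]; intros H; simpl; [reflexivity|].
  rewrite IH, H by first [lia | intros; apply H; lia]. lra.
Qed.

Lemma rsum_comm n m f :
  rsum n (fun i => rsum m (fun j => f i j)) = rsum m (fun j => rsum n (fun i => f i j)).
Proof.
  induction n as [|n IH]; simpl.
  - symmetry. apply rsum_0. reflexivity.
  - rewrite IH, <- rsum_add. reflexivity.
Qed.

Lemma rsum_le n f g : (forall i, (i < n)%nat -> f i <= g i) -> rsum n f <= rsum n g.
Proof.
  induction n as [|n IH]; intros H; simpl; [lra|].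
  pose proof (H n ltac:(lia)). pose proof (IH ltac:(intros; apply H; lia)). lra.
Qed.

Lemma rsum_nonneg n f : (forall i, (i < n)%nat -> 0 <= f i) -> 0 <= rsum n f.
Proof.
  intros H. rewrite <- (rsum_0 n (fun _ => 0)) by reflexivity. now apply rsum_le.
Qed.

Lemma Rabs_rsum n f : Rabs (rsum n f) <= rsum n (fun i => Rabs (f i)).
Proof.
  induction n; simpl; [rewrite Rabs_R0; lra|].
  eapply Rle_trans; [apply Rabs_triang | lra].
Qed.

Lemma rsum_ge_term n f i :
  (i < n)%nat -> (forall k, (k < n)%nat -> 0 <= f k) -> f i <= rsum n f.
Proof.
  induction n as [|n IH]; intros Hi H; simpl; [lia|].
  destruct (Nat.eq_dec i n) as [->|].
  - pose proof (rsum_nonneg n f ltac:(intros; apply H; lia)). lra.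
  - pose proof (IH ltac:(lia) ltac:(intros; apply H; lia)). pose proof (H n ltac:(lia)). lra.
Qed.

Lemma rsum_nonneg_eq0 n f :
  (forall i, (i < n)%nat -> 0 <= f i) -> rsum n f <= 0 -> forall i, (i < n)%nat -> f i = 0.
Proof. intros H Hs i Hi. pose proof (rsum_ge_term n f i Hi H). pose proof (H i Hi). lra. Qed.

Lemma rsum_idmx_r n f j : (j < n)%nat -> rsum n (fun k => f k * idmx k j) = f j.
Proof.
  induction n as [|n IH]; intros Hj; simpl; [lia|]. unfold idmx at 2.
  destruct (Nat.eqb_spec n j) as [<-|Hne].
  - rewrite rsum_0; [lra|]. intros i Hi. unfold idmx.
    destruct (Nat.eqb_spec i n); [lia|lra].
  - rewrite IH by lia. lra.
Qed.

Lemma rsum_S_sum_f_R0 n f : rsum (S n) f = sum_f_R0 f n.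
Proof. induction n; simpl in *; [lra|]. now rewrite <- IHn. Qed.

Lemma mvec_ext n M x y :
  (forall i, (i < n)%nat -> x i = y i) -> forall i, mvec n M x i = mvec n M y i.
Proof. intros H i. apply rsum_ext. intros k Hk. now rewrite H. Qed.

Lemma dot_ext n x x' y y' :
  (forall i, (i < n)%nat -> x i = x' i) -> (forall i, (i < n)%nat -> y i = y' i) ->
  dot n x y = dot n x' y'.
Proof. intros Hx Hy. apply rsum_ext. intros i Hi. now rewrite Hx, Hy. Qed.

Lemma quad_ext n M x y : (forall i, (i < n)%nat -> x i = y i) -> quad n M x = quad n M y.
Proof. intros H. apply dot_ext; [exact H|]. intros i _. now apply mvec_ext. Qed.

Lemma dot_comm n x y : dot n x y = dot n y x.
Proof. apply rsum_ext. intros; ring. Qed.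

Lemma dot_add_l n x y z : dot n (fun i => x i + y i) z = dot n x z + dot n y z.
Proof. unfold dot. rewrite <- rsum_add. apply rsum_ext. intros; ring. Qed.

Lemma dot_scal_l n c x z : dot n (fun i => c * x i) z = c * dot n x z.
Proof. unfold dot. rewrite <- rsum_mult_l. apply rsum_ext. intros; ring. Qed.

Lemma dot_add_r n x y z : dot n x (fun i => y i + z i) = dot n x y + dot n x z.
Proof. unfold dot. rewrite <- rsum_add. apply rsum_ext. intros; ring. Qed.

Lemma dot_scal_r n c x z : dot n x (fun i => c * z i) = c * dot n x z.
Proof. unfold dot. rewrite <- rsum_mult_l. apply rsum_ext. intros; ring. Qed.

Lemma dot_vopp_l n x y : dot n (vopp x) y = - dot n x y.
Proof.
  unfold dot, vopp. transitivity (rsum n (fun i => -1 * (x i * y i))).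
  - apply rsum_ext. intros; ring.
  - rewrite rsum_mult_l. ring.
Qed.

Lemma mvec_add n M x y i : mvec n M (fun j => x j + y j) i = mvec n M x i + mvec n M y i.
Proof. unfold mvec. rewrite <- rsum_add. apply rsum_ext. intros; ring. Qed.

Lemma mvec_scal n M c x i : mvec n M (fun j => c * x j) i = c * mvec n M x i.
Proof. unfold mvec. rewrite <- rsum_mult_l. apply rsum_ext. intros; ring. Qed.

Lemma mvec_vopp n M x : mvec n M (vopp x) = vopp (mvec n M x).
Proof.
  apply functional_extensionality. intros i. unfold vopp.
  transitivity (mvec n M (fun j => -1 * x j) i).
  - apply mvec_ext. intros; ring.
  - rewrite mvec_scal. ring.
Qed.

Lemma mvec_rsum n M (c : nat -> R) (w : nat -> Vec) k :
  mvec n M (fun l => rsum n (fun i => c i * w i l)) k = rsum n (fun i => c i * mvec n M (w i) k).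
Proof.
  unfold mvec. transitivity (rsum n (fun l => rsum n (fun i => c i * (M k l * w i l)))).
  - apply rsum_ext. intros. rewrite <- rsum_mult_l. apply rsum_ext. intros; ring.
  - rewrite rsum_comm. apply rsum_ext. intros. apply rsum_mult_l.
Qed.

Lemma mvec_mmul n A B x i : mvec n (mmul n A B) x i = mvec n A (mvec n B x) i.
Proof.
  unfold mvec, mmul. transitivity (rsum n (fun k => rsum n (fun j => A i j * B j k * x k))).
  - apply rsum_ext. intros. apply eq_sym, rsum_mult_r.
  - rewrite rsum_comm. apply rsum_ext. intros. rewrite <- rsum_mult_l.
    apply rsum_ext. intros; ring.
Qed.

Lemma dot_trmx n A y z : dot n y (mvec n (trmx A) z) = dot n (mvec n A y) z.
Proof.
  unfold dot, mvec, trmx. transitivity (rsum n (fun i => rsum n (fun k => A k i * y i * z k))).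
  - apply rsum_ext. intros. rewrite <- rsum_mult_l. apply rsum_ext. intros; ring.
  - rewrite rsum_comm. apply rsum_ext. intros. rewrite <- rsum_mult_r.
    apply rsum_ext. intros; ring.
Qed.

Lemma quad_madd n M N x : quad n (madd M N) x = quad n M x + quad n N x.
Proof.
  unfold quad, dot. rewrite <- rsum_add. apply rsum_ext. intros.
  unfold mvec, madd. rewrite <- Rmult_plus_distr_l, <- rsum_add.
  f_equal. apply rsum_ext. intros; ring.
Qed.

Lemma quad_mscale n c M x : quad n (mscale c M) x = c * quad n M x.
Proof.
  unfold quad, dot. rewrite <- rsum_mult_l. apply rsum_ext. intros i _.
  unfold mvec, mscale. rewrite <- Rmult_assoc, (Rmult_comm c), Rmult_assoc.
  f_equal. rewrite <- rsum_mult_l. apply rsum_ext. intros; ring.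
Qed.

Lemma quad_vopp n M x : quad n M (vopp x) = quad n M x.
Proof. unfold quad. rewrite dot_vopp_l, mvec_vopp, dot_comm, dot_vopp_l, dot_comm. ring. Qed.

Lemma quad_add_scal n M x y t :
  quad n M (fun i => x i + t * y i) =
  quad n M x + t * (dot n x (mvec n M y) + dot n y (mvec n M x)) + t ^ 2 * quad n M y.
Proof.
  unfold quad.
  rewrite (dot_ext n _ (fun i => x i + t * y i) _
             (fun i => mvec n M x i + t * mvec n M y i)); cycle 1.
  - reflexivity.
  - intros i _. now rewrite mvec_add, mvec_scal.
  - rewrite dot_add_l, dot_scal_l, !dot_add_r, !dot_scal_r.
    ring.
Qed.

(** * Orthonormal eigenbases *)

Module OrthonormalMx.
Import all_boot all_algebra Rstruct.

Lemma rsum_big n (f : nat -> R) : rsum n f = (\sum_(i < n) f i)%R.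
Proof.
  elim: n => [|n IH]; first by rewrite big_ord0.
  by rewrite big_ord_recr /= IH.
Qed.

(* For a square matrix [U U^T = 1] implies [U^T U = 1]. *)
Lemma orthonormal_complete n (u : nat -> Vec) :
  (forall i j, (i < n)%coq_nat -> (j < n)%coq_nat ->
     dot n (u i) (u j) = if Nat.eqb i j then 1 else 0) ->
  forall j k, (j < n)%coq_nat -> (k < n)%coq_nat ->
    rsum n (fun i => u i j * u i k) = if Nat.eqb j k then 1 else 0.
Proof.
  move=> Hu j k /ltP Hj /ltP Hk.
  pose U : 'M[R]_n := (\matrix_(i, l) u i l)%R.
  have UUt : (U *m U^T)%R = 1%:M%R.
    apply/matrixP => i l; rewrite !mxE.
    under eq_bigr do rewrite !mxE.
    rewrite -(rsum_big n (fun m => u i m * u l m)) -/(dot n (u i) (u l)) Hu; [|exact/ltP|exact/ltP].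
    case: (Nat.eqb_spec i l) => [Hil | Hil].
    - by have -> : i == l by apply/eqP; apply: val_inj.
    - by case: eqP => // Heq; rewrite Heq in Hil.
  move/matrixP: (mulmx1C UUt) => /(_ (Ordinal Hj) (Ordinal Hk)); rewrite !mxE.
  under eq_bigr do rewrite !mxE.
  rewrite -(rsum_big n (fun m => u m j * u m k)) => ->.
  case: (Nat.eqb_spec j k) => [Hjk | Hjk].
  - by have -> : Ordinal Hj == Ordinal Hk by apply/eqP; apply: val_inj.
  - by case: eqP => // [[]].
Qed.

End OrthonormalMx.

Section LorentzEigenbasis.
Variables (n : nat) (Q : Mat) (lam : nat -> R) (u : nat -> Vec).
Hypothesis Heig : lorentz_eigen n Q lam u.

Lemma eigen_expansion z k : (k < n)%nat -> z k = rsum n (fun i => dot n z (u i) * u i k).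
Proof.
  intros Hk. destruct Heig as [Hortho _].
  transitivity (rsum n (fun j => z j * rsum n (fun i => u i j * u i k))).
  - rewrite <- (rsum_idmx_r n z k Hk). apply rsum_ext. intros j Hj.
    rewrite OrthonormalMx.orthonormal_complete by assumption. reflexivity.
  - unfold dot. transitivity (rsum n (fun j => rsum n (fun i => z j * u i j * u i k))).
    + apply rsum_ext. intros. rewrite <- rsum_mult_l. apply rsum_ext. intros; ring.
    + rewrite rsum_comm. apply rsum_ext. intros. apply rsum_mult_r.
Qed.

Lemma dot_Q_eigvec z i : (i < n)%nat -> dot n z (mvec n Q (u i)) = lam i * dot n z (u i).
Proof.
  intros Hi. destruct Heig as [_ [HQ _]].
  unfold dot. rewrite <- rsum_mult_l. apply rsum_ext. intros. rewrite HQ by assumption. ring.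
Qed.

Lemma quad_eigen z : quad n Q z = rsum n (fun i => lam i * dot n z (u i) ^ 2).
Proof.
  destruct Heig as [_ [HQ _]]. unfold quad.
  rewrite (dot_ext n z z _ (fun k => rsum n (fun i => dot n z (u i) * (lam i * u i k))));
    [| reflexivity |].
  - unfold dot at 1.
    transitivity (rsum n (fun k => rsum n (fun i => dot n z (u i) * lam i * (z k * u i k)))).
    + apply rsum_ext. intros. rewrite <- rsum_mult_l. apply rsum_ext. intros; ring.
    + rewrite rsum_comm. apply rsum_ext. intros. rewrite rsum_mult_l. unfold dot. ring.
  - intros k Hk.
    rewrite (mvec_ext n Q z (fun l => rsum n (fun i => dot n z (u i) * u i l)))
      by (intros; apply eigen_expansion; assumption).
    rewrite mvec_rsum. apply rsum_ext. intros. rewrite HQ by assumption. reflexivity.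
Qed.

Lemma quad_eigvec i : (i < n)%nat -> quad n Q (u i) = lam i.
Proof.
  intros Hi. unfold quad. rewrite dot_Q_eigvec by assumption.
  destruct Heig as [Hortho _]. rewrite Hortho, Nat.eqb_refl by assumption. ring.
Qed.

(* Orthogonality to [Q u_n = lam_n u_n] kills the only negative eigen-coordinate. *)
Lemma quad_nonpos_orth_eq0 z :
  (1 <= n)%nat -> quad n Q z <= 0 -> dot n z (mvec n Q (u (n - 1)%nat)) = 0 ->
  forall k, (k < n)%nat -> z k = 0.
Proof.
  intros Hn Hq Hd k Hk.
  destruct Heig as [_ [_ [_ [Hpos Hneg]]]].
  rewrite dot_Q_eigvec in Hd by lia.
  assert (Hlast : dot n z (u (n - 1)%nat) = 0).
  { destruct (Rmult_integral _ _ Hd); [lra | assumption]. }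
  assert (Hcoord : forall i, (i < n)%nat -> dot n z (u i) = 0).
  { intros i Hi. destruct (Nat.eq_dec i (n - 1)) as [->|Hne]; [assumption|].
    rewrite quad_eigen in Hq.
    assert (Hterms : forall j, (j < n)%nat -> 0 <= lam j * dot n z (u j) ^ 2).
    { intros j Hj. destruct (Nat.eq_dec j (n - 1)) as [->|].
      - rewrite Hlast. lra.
      - apply Rmult_le_pos; [apply Rlt_le, Hpos; lia | apply pow2_ge_0]. }
    pose proof (rsum_nonneg_eq0 _ _ Hterms Hq i Hi) as Hi0.
    pose proof (Hpos i ltac:(lia)).
    destruct (Rmult_integral _ _ Hi0) as [|Hsq]; [lra|].
    destruct (Req_dec (dot n z (u i)) 0) as [|Hnz]; [assumption|].
    exfalso. exact (pow_nonzero _ 2 Hnz Hsq). }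
  rewrite eigen_expansion by assumption.
  apply rsum_0. intros i Hi. rewrite Hcoord by assumption. ring.
Qed.

End LorentzEigenbasis.

(** * An S-lemma for indefinite forms *)

(* The roots [t1 > 0 > t2] of the first quadratic have product [qx / qy];
   weighting the two inequalities by [t2] and [-t1] eliminates the linear term. *)
Lemma quadratic_nonpos_at_roots qx qy b mx my c :
  0 < qx -> qy < 0 ->
  (forall t, qx + t * b + t ^ 2 * qy = 0 -> mx + t * c + t ^ 2 * my <= 0) ->
  my * qx <= mx * qy.
Proof.
  intros Hqx Hqy Hroots.
  set (D := b ^ 2 - 4 * qx * qy).
  assert (HD : 0 < D) by (unfold D; nra).
  set (s := sqrt D).
  assert (Hss : s * s = D) by (apply sqrt_sqrt; lra).
  assert (Hs2 : s ^ 2 = D) by (rewrite <- Hss; ring).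
  assert (Hbs : b * b < s * s) by (rewrite Hss; unfold D; nra).
  assert (Hs0 : 0 <= s) by apply sqrt_pos.
  assert (Hb : b < s /\ - b < s) by (split; nra).
  set (t1 := (b + s) / (-2 * qy)). set (t2 := (b - s) / (-2 * qy)).
  assert (Hroot : forall t, t = t1 \/ t = t2 -> qx + t * b + t ^ 2 * qy = 0).
  { intros t [-> | ->]; unfold t1, t2; field_simplify; try lra;
      rewrite Hs2; unfold D; field; lra. }
  assert (H1 := Hroots t1 (Hroot t1 (or_introl eq_refl))).
  assert (H2 := Hroots t2 (Hroot t2 (or_intror eq_refl))).
  assert (Ht1 : 0 < t1) by (unfold t1; apply Rdiv_lt_0_compat; lra).
  assert (Ht2 : t2 < 0).
  { assert (0 < (s - b) / (-2 * qy)) by (apply Rdiv_lt_0_compat; lra).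
    replace t2 with (- ((s - b) / (-2 * qy))) by (unfold t2; field; lra). lra. }
  assert (Hprod : t1 * t2 * qy = qx).
  { unfold t1, t2. field_simplify; [|lra]. rewrite Hs2. unfold D. field. lra. }
  assert (Helim : t2 * (mx + t1 * c + t1 ^ 2 * my) - t1 * (mx + t2 * c + t2 ^ 2 * my)
                  = (t2 - t1) * (mx - my * (t1 * t2))) by ring.
  assert (Hk : mx - my * (t1 * t2) <= 0).
  { assert (0 <= (t2 - t1) * (mx - my * (t1 * t2))) by (rewrite <- Helim; nra). nra. }
  rewrite <- Hprod. nra.
Qed.

Lemma quad_ratio_le n (Q M : Mat) x y :
  0 < quad n Q x -> quad n Q y < 0 ->
  (forall z, quad n Q z = 0 -> quad n M z <= 0) ->
  quad n M x / quad n Q x <= quad n M y / quad n Q y.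
Proof.
  intros Hx Hy Hnull.
  assert (Hcross : quad n M y * quad n Q x <= quad n M x * quad n Q y).
  { apply (quadratic_nonpos_at_roots _ _ (dot n x (mvec n Q y) + dot n y (mvec n Q x))
             _ _ (dot n x (mvec n M y) + dot n y (mvec n M x))); try assumption.
    intros t Ht. rewrite <- quad_add_scal. apply Hnull. now rewrite quad_add_scal. }
  apply (Rmult_le_reg_r (- (quad n Q x * quad n Q y))); [nra|].
  replace (quad n M x / quad n Q x * - (quad n Q x * quad n Q y))
    with (- (quad n M x * quad n Q y)) by (field; lra).
  replace (quad n M y / quad n Q y * - (quad n Q x * quad n Q y))
    with (- (quad n M y * quad n Q x)) by (field; lra).
  lra.
Qed.

(* [eta] is the infimum of [M(y) / Q(y)] over [Q(y) < 0]; by [quad_ratio_le] it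
   dominates every ratio [M(x) / Q(x)] with [Q(x) > 0]. *)
Lemma s_lemma n (Q M : Mat) x0 y0 :
  0 < quad n Q x0 -> quad n Q y0 < 0 ->
  (forall z, quad n Q z = 0 -> quad n M z <= 0) ->
  exists eta, nsd n (madd M (mscale (- eta) Q)).
Proof.
  intros Hx0 Hy0 Hnull.
  set (lower := fun r => forall y, quad n Q y < 0 -> r <= quad n M y / quad n Q y).
  assert (Hbound : bound lower).
  { exists (quad n M y0 / quad n Q y0). intros r Hr. now apply Hr. }
  assert (Hinhab : exists r, lower r).
  { exists (quad n M x0 / quad n Q x0). intros y Hy. now apply quad_ratio_le. }
  destruct (completeness lower Hbound Hinhab) as [eta [Hub Hlub]].
  exists eta. intros x. rewrite quad_madd, quad_mscale.
  destruct (Rtotal_order (quad n Q x) 0) as [Hneg | [Hzero | Hpos]].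
  - assert (Hle : eta <= quad n M x / quad n Q x) by (apply Hlub; intros r Hr; now apply Hr).
    apply (Rmult_le_compat_neg_l (quad n Q x)) in Hle; [|lra].
    replace (quad n Q x * (quad n M x / quad n Q x)) with (quad n M x) in Hle by (field; lra).
    lra.
  - rewrite Hzero. specialize (Hnull x Hzero). lra.
  - assert (Hle : quad n M x / quad n Q x <= eta)
      by (apply Hub; intros y Hy; now apply quad_ratio_le).
    apply (Rmult_le_compat_l (quad n Q x)) in Hle; [|lra].
    replace (quad n Q x * (quad n M x / quad n Q x)) with (quad n M x) in Hle by (field; lra).
    lra.
Qed.

Lemma nsd_dim1 (Q M : Mat) y :
  quad 1 Q y <> 0 -> exists eta, nsd 1 (madd M (mscale (- eta) Q)).
Proof.
  unfold quad, dot, mvec; simpl. intros Hy.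
  assert (HQ : Q 0%nat 0%nat <> 0) by (intros HQ; apply Hy; rewrite HQ; ring).
  exists (M 0%nat 0%nat / Q 0%nat 0%nat). intros x.
  rewrite quad_madd, quad_mscale. unfold quad, dot, mvec; simpl.
  right. field. exact HQ.
Qed.

(** * The flow of [x' = A x] as a power series *)

Fixpoint iter_mvec (n : nat) (A : Mat) (x : Vec) (k : nat) : Vec :=
  match k with
  | O => x
  | S k' => mvec n A (iter_mvec n A x k')
  end.

Definition exp_coef n A x i k := iter_mvec n A x k i / INR (fact k).

(* [flow n A x t] is [e^{tA} x], defined componentwise as a power series in [t]. *)
Definition flow n A x (t : R) : Vec := fun i => PSeries (exp_coef n A x i) t.

Lemma mvec_mpow n A x k i : (i < n)%nat -> mvec n (mpow n A k) x i = iter_mvec n A x k i.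
Proof.
  revert i. induction k as [|k IH]; intros i Hi; simpl.
  - unfold mvec. rewrite <- (rsum_idmx_r n x i Hi). apply rsum_ext. intros l _.
    unfold idmx. rewrite Nat.eqb_sym. ring.
  - rewrite mvec_mmul. apply mvec_ext. intros; now apply IH.
Qed.

Definition norm1 n (v : Vec) := rsum n (fun j => Rabs (v j)).
Definition mx_norm1 n (A : Mat) := rsum n (fun i => rsum n (fun j => Rabs (A i j))).

Lemma norm1_ge0 n v : 0 <= norm1 n v.
Proof. apply rsum_nonneg. intros; apply Rabs_pos. Qed.

Lemma mx_norm1_ge0 n A : 0 <= mx_norm1 n A.
Proof. apply rsum_nonneg. intros. apply rsum_nonneg. intros; apply Rabs_pos. Qed.

Lemma Rabs_le_norm1 n v i : (i < n)%nat -> Rabs (v i) <= norm1 n v.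
Proof.
  intros Hi. apply (rsum_ge_term n (fun j => Rabs (v j))); [assumption|].
  intros; apply Rabs_pos.
Qed.

Lemma norm1_mvec n A v : norm1 n (mvec n A v) <= mx_norm1 n A * norm1 n v.
Proof.
  unfold norm1 at 1, mx_norm1. rewrite <- rsum_mult_r. apply rsum_le. intros i Hi.
  eapply Rle_trans; [apply Rabs_rsum|]. rewrite <- rsum_mult_r. apply rsum_le. intros j Hj.
  rewrite Rabs_mult. apply Rmult_le_compat_l; [apply Rabs_pos | now apply Rabs_le_norm1].
Qed.

Lemma norm1_iter_mvec n A x k : norm1 n (iter_mvec n A x k) <= mx_norm1 n A ^ k * norm1 n x.
Proof.
  induction k as [|k IH]; simpl; [lra|].
  eapply Rle_trans; [apply norm1_mvec|]. rewrite Rmult_assoc.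
  apply Rmult_le_compat_l; [apply mx_norm1_ge0 | exact IH].
Qed.

Lemma pow_div_fact_bounded c : exists B, forall k, c ^ k / INR (fact k) <= B.
Proof.
  destruct (cv_speed_pow_fact c 1 ltac:(lra)) as [N HN].
  set (S := sum_f_R0 (fun k => Rabs (c ^ k / INR (fact k))) N).
  exists (1 + S). intros k.
  pose proof (Rle_abs (c ^ k / INR (fact k))).
  assert (HS : 0 <= S)
    by (unfold S; rewrite <- rsum_S_sum_f_R0; apply rsum_nonneg; intros; apply Rabs_pos).
  destruct (le_lt_dec k N) as [Hk|Hk].
  - assert (Rabs (c ^ k / INR (fact k)) <= S).
    { unfold S. rewrite <- rsum_S_sum_f_R0.
      apply (rsum_ge_term _ (fun k => Rabs (c ^ k / INR (fact k)))); [lia|].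
      intros; apply Rabs_pos. }
    lra.
  - specialize (HN k ltac:(lia)). unfold R_dist in HN. rewrite Rminus_0_r in HN. lra.
Qed.

Lemma exp_coef_radius n A x i t : (i < n)%nat -> Rbar_lt (Rabs t) (CV_radius (exp_coef n A x i)).
Proof.
  intros Hi. set (r := Rabs t + 1).
  assert (Hr : 0 <= r) by (unfold r; pose proof (Rabs_pos t); lra).
  assert (Hin : Rbar_le r (CV_radius (exp_coef n A x i))).
  { apply (proj1 (CV_radius_bounded _)).
    destruct (pow_div_fact_bounded (mx_norm1 n A * r)) as [B HB].
    exists (norm1 n x * B). intros k. unfold exp_coef, Rdiv.
    rewrite !Rabs_mult, Rabs_inv, (Rabs_pos_eq (INR (fact k))) by apply pos_INR.
    rewrite (Rabs_pos_eq (r ^ k)) by (apply pow_le; exact Hr).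
    specialize (HB k). rewrite Rpow_mult_distr in HB.
    assert (Hit : Rabs (iter_mvec n A x k i) <= mx_norm1 n A ^ k * norm1 n x)
      by (eapply Rle_trans; [apply Rabs_le_norm1, Hi | apply norm1_iter_mvec]).
    pose proof (Rinv_0_lt_compat _ (INR_fact_lt_0 k)).
    pose proof (pow_le _ k Hr).
    apply Rle_trans with (mx_norm1 n A ^ k * norm1 n x * / INR (fact k) * r ^ k).
    - apply Rmult_le_compat_r; [assumption|]. apply Rmult_le_compat_r; lra.
    - replace (mx_norm1 n A ^ k * norm1 n x * / INR (fact k) * r ^ k)
        with (norm1 n x * (mx_norm1 n A ^ k * r ^ k / INR (fact k))) by (unfold Rdiv; ring).
      apply Rmult_le_compat_l; [apply norm1_ge0 | exact HB]. }
  unfold r in Hin. destruct (CV_radius (exp_coef n A x i)); simpl in *; lra.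
Qed.

Lemma flow_is_series n A x i t :
  (i < n)%nat -> is_series (fun k => exp_coef n A x i k * t ^ k) (flow n A x t i).
Proof.
  intros Hi. apply Series_correct, ex_pseries_R, CV_radius_inside.
  now apply exp_coef_radius.
Qed.

Lemma flow_Un_cv n A x i t :
  (i < n)%nat -> Un_cv (sum_f_R0 (fun k => exp_coef n A x i k * t ^ k)) (flow n A x t i).
Proof. intros Hi. apply is_series_Reals, flow_is_series, Hi. Qed.

Lemma flow_0 n A x i : flow n A x 0 i = x i.
Proof. unfold flow. rewrite PSeries_0. unfold exp_coef. simpl. field. Qed.

Lemma is_series_rsum n (f : nat -> nat -> R) (l : nat -> R) :
  (forall j, (j < n)%nat -> is_series (f j) (l j)) ->
  is_series (fun k => rsum n (fun j => f j k)) (rsum n l).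
Proof.
  induction n as [|n IH]; intros H; simpl.
  - pose proof (is_series_scal_r 0 _ _ (is_series_geom 0 ltac:(rewrite Rabs_R0; lra))) as H0.
    rewrite Rmult_0_r in H0. eapply is_series_ext; [|exact H0]. intros; simpl; ring.
  - apply (is_series_plus (fun k => rsum n (fun j => f j k)) (f n)).
    + apply IH. intros; apply H; lia.
    + apply H; lia.
Qed.

Lemma PS_derive_exp_coef n A x i k :
  PS_derive (exp_coef n A x i) k = rsum n (fun j => A i j * exp_coef n A x j k).
Proof.
  unfold PS_derive, exp_coef. simpl iter_mvec. unfold mvec.
  rewrite fact_simpl, mult_INR.
  transitivity (rsum n (fun j => A i j * iter_mvec n A x k j) / INR (fact k)).
  - field. split; [apply INR_fact_neq_0 | apply not_0_INR; lia].
  - unfold Rdiv. rewrite <- rsum_mult_r. apply rsum_ext. intros; ring.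
Qed.

Lemma flow_derive n A x t i :
  (i < n)%nat -> is_derive (fun s => flow n A x s i) t (mvec n A (flow n A x t) i).
Proof.
  intros Hi. unfold flow at 1.
  replace (mvec n A (flow n A x t) i) with (PSeries (PS_derive (exp_coef n A x i)) t).
  - apply is_derive_PSeries, exp_coef_radius, Hi.
  - unfold PSeries. apply is_series_unique.
    eapply is_series_ext.
    2: { apply (is_series_rsum n (fun j k => A i j * (exp_coef n A x j k * t ^ k))).
         intros j Hj. apply (is_series_scal_l (K := R_AbsRing) (V := R_NormedModule)).
         apply flow_is_series, Hj. }
    intros k. simpl. rewrite PS_derive_exp_coef, <- rsum_mult_r. apply rsum_ext. intros; ring.
Qed.

Lemma Un_cv_const c : Un_cv (fun _ => c) c.
Proof.
  intros eps Heps. exists 0%nat. intros. unfold R_dist. rewrite Rminus_diag, Rabs_R0. exact Heps.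
Qed.

Lemma Un_cv_rsum n (f : nat -> nat -> R) (l : nat -> R) :
  (forall j, (j < n)%nat -> Un_cv (f j) (l j)) ->
  Un_cv (fun N => rsum n (fun j => f j N)) (rsum n l).
Proof.
  induction n as [|n IH]; intros H; simpl.
  - apply Un_cv_const.
  - apply CV_plus; [apply IH; intros; apply H; lia | apply H; lia].
Qed.

Lemma exp_partial_sum_flow n A x t N i :
  (i < n)%nat ->
  mvec n (expm_partial n A t N) x i = sum_f_R0 (fun k => exp_coef n A x i k * t ^ k) N.
Proof.
  intros Hi. rewrite <- rsum_S_sum_f_R0. unfold expm_partial, mvec.
  transitivity
    (rsum (S N) (fun k => rsum n (fun j => t ^ k / INR (fact k) * mpow n A k i j * x j))).
  - rewrite rsum_comm. apply rsum_ext. intros. apply eq_sym, rsum_mult_r.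
  - apply rsum_ext. intros k _.
    unfold exp_coef. rewrite <- (mvec_mpow n A x k i Hi).
    transitivity (t ^ k / INR (fact k) * mvec n (mpow n A k) x i).
    + unfold mvec. rewrite <- rsum_mult_l. apply rsum_ext. intros; ring.
    + unfold Rdiv. ring.
Qed.

Lemma mvec_expm_flow n A t E x i : is_expm n A t E -> (i < n)%nat -> mvec n E x i = flow n A x t i.
Proof.
  intros HE Hi. apply (UL_sequence (fun N => mvec n (expm_partial n A t N) x i)).
  - apply (Un_cv_rsum n (fun j N => expm_partial n A t N i j * x j)). intros j Hj.
    apply CV_mult; [now apply HE | apply Un_cv_const].
  - eapply Un_cv_ext; [|apply flow_Un_cv, Hi]. intros N. now rewrite exp_partial_sum_flow.
Qed.

Lemma is_expm_exists n A t : exists E, is_expm n A t E.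
Proof.
  exists (fun i j => flow n A (fun l => idmx l j) t i). intros i j Hi Hj.
  eapply Un_cv_ext; [|apply flow_Un_cv, Hi]. intros N.
  rewrite <- exp_partial_sum_flow by exact Hi. unfold mvec. now rewrite rsum_idmx_r.
Qed.

(** * Differential inequalities along the flow *)

Lemma is_derive_mult_R (f g : R -> R) x df dg :
  is_derive f x df -> is_derive g x dg -> is_derive (fun t => f t * g t) x (df * g x + f x * dg).
Proof. intros Hf Hg. apply (is_derive_mult f g x df dg Hf Hg). intros; apply Rmult_comm. Qed.

Lemma is_derive_exp_scal c x : is_derive (fun t => exp (c * t)) x (c * exp (c * x)).
Proof.
  replace (c * exp (c * x)) with (scal (c * 1) (exp (c * x)))
    by (unfold scal; simpl; unfold mult; simpl; ring).
  apply (is_derive_comp exp (fun t => c * t)); [apply is_derive_exp|].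
  apply is_derive_scal, (is_derive_id (K := R_AbsRing)).
Qed.

Lemma nonincreasing_of_derive (g dg : R -> R) a b :
  a <= b -> (forall s, is_derive g s (dg s)) -> (forall s, a <= s <= b -> dg s <= 0) -> g b <= g a.
Proof.
  intros Hab Hd Hneg.
  destruct (MVT_gen g a b dg) as [c [Hc Hmvt]].
  - intros; apply Hd.
  - intros s _. apply derivable_continuous_pt. exists (dg s). apply is_derive_Reals, Hd.
  - rewrite Rmin_left, Rmax_right in Hc by exact Hab.
    specialize (Hneg c Hc). nra.
Qed.

Lemma gronwall (g dg : R -> R) c b :
  0 <= b -> (forall s, is_derive g s (dg s)) -> (forall s, 0 <= s <= b -> dg s <= c * g s) ->
  exp (- c * b) * g b <= g 0.
Proof.
  intros Hb Hd Hle.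
  replace (g 0) with (exp (- c * 0) * g 0) by (rewrite Rmult_0_r, exp_0; ring).
  apply (nonincreasing_of_derive (fun s => exp (- c * s) * g s)
           (fun s => - c * exp (- c * s) * g s + exp (- c * s) * dg s) 0 b Hb).
  - intros s. apply (is_derive_mult_R (fun s => exp (- c * s)) g);
      [apply is_derive_exp_scal | apply Hd].
  - intros s Hs. specialize (Hle s Hs). pose proof (exp_pos (- c * s)). nra.
Qed.

Lemma derive_nonpos_of_right_le (f : R -> R) a d :
  is_derive f a d -> (forall h, 0 < h -> f (a + h) <= f a) -> d <= 0.
Proof.
  intros Hd Hright. apply is_derive_Reals in Hd.
  apply Rnot_lt_le. intros Hpos.
  destruct (Hd d Hpos) as [del Hdel].
  pose proof (cond_pos del) as Hdel0.
  set (h := del / 2).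
  assert (Hh : 0 < h) by (unfold h; lra).
  assert (Hquot : Rabs ((f (a + h) - f a) / h - d) < d)
    by (apply Hdel; [lra | rewrite Rabs_pos_eq; unfold h; lra]).
  apply Rabs_def2 in Hquot.
  specialize (Hright h Hh).
  assert (Hq : (f (a + h) - f a) / h * h = f (a + h) - f a) by (field; lra).
  set (q := (f (a + h) - f a) / h) in *.
  assert (0 < q * h) by (apply Rmult_lt_0_compat; lra).
  lra.
Qed.

Lemma is_derive_rsum n (f : nat -> R -> R) (df : nat -> R) t :
  (forall j, (j < n)%nat -> is_derive (f j) t (df j)) ->
  is_derive (fun s => rsum n (fun j => f j s)) t (rsum n df).
Proof.
  induction n as [|n IH]; intros H; simpl.
  - apply (is_derive_const (K := R_AbsRing) 0).
  - apply (is_derive_plus (fun s => rsum n (fun j => f j s)) (f n));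
      [apply IH; intros; apply H | apply H]; lia.
Qed.

Lemma is_derive_dot n (Y Z : R -> Vec) (dY dZ : Vec) t :
  (forall i, (i < n)%nat -> is_derive (fun s => Y s i) t (dY i)) ->
  (forall i, (i < n)%nat -> is_derive (fun s => Z s i) t (dZ i)) ->
  is_derive (fun s => dot n (Y s) (Z s)) t (dot n dY (Z t) + dot n (Y t) dZ).
Proof.
  intros HY HZ. unfold dot. rewrite <- rsum_add.
  apply (is_derive_rsum n (fun j s => Y s j * Z s j)). intros j Hj.
  apply (is_derive_mult_R (fun s => Y s j) (fun s => Z s j)); auto.
Qed.

Lemma is_derive_mvec n M (Y : R -> Vec) (dY : Vec) t :
  (forall i, (i < n)%nat -> is_derive (fun s => Y s i) t (dY i)) ->
  forall k, is_derive (fun s => mvec n M (Y s) k) t (mvec n M dY k).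
Proof.
  intros HY k. apply (is_derive_rsum n (fun j s => M k j * Y s j)). intros j Hj.
  apply is_derive_scal, HY, Hj.
Qed.

Definition lyap_mx n (A Q : Mat) : Mat := madd (mmul n (trmx A) Q) (mmul n Q A).

Lemma quad_flow_derive n A Q x t :
  is_derive (fun s => quad n Q (flow n A x s)) t (quad n (lyap_mx n A Q) (flow n A x t)).
Proof.
  set (y := flow n A x t).
  replace (quad n (lyap_mx n A Q) y)
    with (dot n (mvec n A y) (mvec n Q y) + dot n y (mvec n Q (mvec n A y))).
  - apply is_derive_dot; [apply flow_derive|].
    intros i _. apply is_derive_mvec. intros; now apply flow_derive.
  - unfold lyap_mx. rewrite quad_madd. unfold quad. f_equal.
    + rewrite <- dot_trmx. apply dot_ext; [reflexivity|]. intros; apply eq_sym, mvec_mmul.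
    + apply dot_ext; [reflexivity|]. intros; apply eq_sym, mvec_mmul.
Qed.

Lemma dot_flow_derive n A x w t :
  is_derive (fun s => dot n (flow n A x s) w) t (dot n (mvec n A (flow n A x t)) w).
Proof.
  replace (dot n (mvec n A (flow n A x t)) w)
    with (dot n (mvec n A (flow n A x t)) w + dot n (flow n A x t) (fun _ => 0)).
  - apply (is_derive_dot n (flow n A x) (fun _ => w)); [apply flow_derive|].
    intros i _. exact (is_derive_const (K := R_AbsRing) (w i) t).
  - unfold dot at 2. rewrite rsum_0; [ring | intros; ring].
Qed.

Lemma norm2_flow_derive n A x t :
  is_derive (fun s => dot n (flow n A x s) (flow n A x s)) t
    (2 * dot n (mvec n A (flow n A x t)) (flow n A x t)).
Proof.
  replace (2 * dot n (mvec n A (flow n A x t)) (flow n A x t))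
    with (dot n (mvec n A (flow n A x t)) (flow n A x t)
          + dot n (flow n A x t) (mvec n A (flow n A x t)))
    by (rewrite (dot_comm n (flow n A x t)); ring).
  apply is_derive_dot; apply flow_derive.
Qed.

Lemma Rabs_mult_le_dot_self n v i j :
  (i < n)%nat -> (j < n)%nat -> Rabs (v i) * Rabs (v j) <= dot n v v.
Proof.
  intros Hi Hj.
  assert (Hsq : forall k, Rabs (v k) * Rabs (v k) = v k * v k)
    by (intros; rewrite <- Rabs_mult; apply Rabs_pos_eq, Rle_0_sqr).
  assert (Hterm : forall k, (k < n)%nat -> v k * v k <= dot n v v)
    by (intros k Hk; apply (rsum_ge_term n (fun l => v l * v l));
        [exact Hk | intros; apply Rle_0_sqr]).
  pose proof (Hterm i Hi). pose proof (Hterm j Hj). pose proof (Hsq i). pose proof (Hsq j).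
  pose proof (pow2_ge_0 (Rabs (v i) - Rabs (v j))). nra.
Qed.

Lemma dot_mvec_self_ge n A v : - (mx_norm1 n A * dot n v v) <= dot n (mvec n A v) v.
Proof.
  enough (Rabs (dot n (mvec n A v) v) <= mx_norm1 n A * dot n v v)
    by (pose proof (Rle_abs (- dot n (mvec n A v) v)); rewrite Rabs_Ropp in *; lra).
  unfold dot at 1, mx_norm1. eapply Rle_trans; [apply Rabs_rsum|].
  rewrite <- rsum_mult_r. apply rsum_le. intros i Hi.
  unfold mvec. rewrite Rabs_mult, Rmult_comm.
  eapply Rle_trans; [apply Rmult_le_compat_l; [apply Rabs_pos | apply Rabs_rsum]|].
  rewrite <- rsum_mult_r, <- rsum_mult_l. apply rsum_le. intros j Hj.
  rewrite Rabs_mult.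
  pose proof (Rabs_mult_le_dot_self n v j i Hj Hi). pose proof (Rabs_pos (A i j)).
  pose proof (Rabs_pos (v i)). pose proof (Rabs_pos (v j)). nra.
Qed.

Lemma dot_self_pos n v i : (i < n)%nat -> v i <> 0 -> 0 < dot n v v.
Proof.
  intros Hi Hv. assert (0 < v i * v i) by (apply Rsqr_pos_lt, Hv).
  pose proof (rsum_ge_term n (fun k => v k * v k) i Hi ltac:(intros; apply Rle_0_sqr)).
  unfold dot. lra.
Qed.

(* [e^{2 |A| s} |x(s)|^2] is nondecreasing, so the flow never reaches [0]. *)
Lemma flow_norm2_pos n A x i s :
  (i < n)%nat -> x i <> 0 -> 0 <= s -> 0 < dot n (flow n A x s) (flow n A x s).
Proof.
  intros Hi Hx Hs.
  set (N := fun r => dot n (flow n A x r) (flow n A x r)).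
  assert (Hgr := gronwall (fun r => - N r)
                   (fun r => - (2 * dot n (mvec n A (flow n A x r)) (flow n A x r)))
                   (- 2 * mx_norm1 n A) s Hs).
  assert (HN0 : N 0 = dot n x x) by (apply dot_ext; intros; apply flow_0).
  pose proof (dot_self_pos n x i Hi Hx) as Hx2.
  pose proof (exp_pos (- (- 2 * mx_norm1 n A) * s)) as He.
  apply (Rmult_lt_reg_l _ _ _ He). rewrite Rmult_0_r.
  enough (Hle : exp (- (- 2 * mx_norm1 n A) * s) * - N s <= - N 0)
    by (rewrite <- Ropp_mult_distr_r in Hle; fold (N s); lra).
  apply Hgr.
  - intros r. apply (is_derive_opp N), norm2_flow_derive.
  - intros r _. pose proof (dot_mvec_self_ge n A (flow n A x r)). unfold N. lra.
Qed.

Lemma quad_flow_nonpos n A Q eta x s :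
  nsd n (madd (lyap_mx n A Q) (mscale (- eta) Q)) -> quad n Q x <= 0 -> 0 <= s ->
  quad n Q (flow n A x s) <= 0.
Proof.
  intros Hnsd Hq Hs.
  assert (Hgr := gronwall (fun r => quad n Q (flow n A x r))
                   (fun r => quad n (lyap_mx n A Q) (flow n A x r)) eta s Hs).
  assert (H0 : quad n Q (flow n A x 0) = quad n Q x) by (apply quad_ext; intros; apply flow_0).
  pose proof (exp_pos (- eta * s)) as He.
  apply (Rmult_le_reg_l _ _ _ He). rewrite Rmult_0_r.
  enough (exp (- eta * s) * quad n Q (flow n A x s) <= quad n Q (flow n A x 0)) by lra.
  apply Hgr; [intros; apply quad_flow_derive|].
  intros r _. specialize (Hnsd (flow n A x r)). rewrite quad_madd, quad_mscale in Hnsd. lra.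
Qed.

(** * Invariance of the Lorentz cone *)

Lemma CL_ext n Q w y z : (forall i, (i < n)%nat -> y i = z i) -> CL n Q w y -> CL n Q w z.
Proof.
  intros H [Hq Hd]. split.
  - now rewrite <- (quad_ext n Q y z H).
  - now rewrite <- (dot_ext n y z (mvec n Q w) (mvec n Q w) H (fun _ _ => eq_refl)).
Qed.

Lemma CL_0 n Q w : CL n Q w (fun _ => 0).
Proof. split; unfold quad, dot; rewrite rsum_0; try lra; intros; ring. Qed.

Section LorentzCone.
Variables (n : nat) (Q A : Mat) (lam : nat -> R) (u : nat -> Vec).
Hypotheses (Hn : (1 <= n)%nat) (Heig : lorentz_eigen n Q lam u).

Let w := mvec n Q (u (n - 1)%nat).

(* The sign of [x(t)^T Q u_n] cannot change: it could only vanish where the flow,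
   which stays in [x^T Q x <= 0], is [0]. *)
Lemma CL_flow_invariant eta x t :
  nsd n (madd (lyap_mx n A Q) (mscale (- eta) Q)) -> 0 <= t ->
  (exists i, (i < n)%nat /\ x i <> 0) -> CL n Q (u (n - 1)%nat) x ->
  CL n Q (u (n - 1)%nat) (flow n A x t).
Proof.
  intros Hnsd Ht [i0 [Hi0 Hx0]] [Hq Hd].
  split; [now apply (quad_flow_nonpos n A Q eta)|].
  set (r := fun s => dot n (flow n A x s) w). fold w in Hd |- *. fold (r t).
  assert (Hr0 : r 0 < 0).
  { replace (r 0) with (dot n x w) by (apply dot_ext; intros; [apply eq_sym, flow_0 | reflexivity]).
    destruct Hd as [|Hd]; [assumption|].
    exfalso. exact (Hx0 (quad_nonpos_orth_eq0 n Q lam u Heig x Hn Hq Hd i0 Hi0)). }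
  apply Rnot_lt_le. intros Hrt.
  assert (Ht0 : 0 < t) by (destruct Ht as [|<-]; [assumption | lra]).
  assert (Hcont : continuity r).
  { intros s. apply derivable_continuous_pt. eexists. apply is_derive_Reals, dot_flow_derive. }
  destruct (IVT r 0 t Hcont Ht0 Hr0 Hrt) as [z [Hz Hrz]].
  assert (Hflow0 : forall k, (k < n)%nat -> flow n A x z k = 0).
  { apply (quad_nonpos_orth_eq0 n Q lam u Heig); [exact Hn | | exact Hrz].
    apply (quad_flow_nonpos n A Q eta); [exact Hnsd | exact Hq | lra]. }
  pose proof (flow_norm2_pos n A x i0 z Hi0 Hx0 ltac:(lra)) as Hpos.
  unfold dot in Hpos. rewrite rsum_0 in Hpos; [lra|].
  intros k Hk. rewrite Hflow0 by exact Hk. ring.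
Qed.

Lemma CL_invariant_of_nsd eta :
  nsd n (madd (lyap_mx n A Q) (mscale (- eta) Q)) -> invariant_cont n A (CL n Q (u (n - 1)%nat)).
Proof.
  intros Hnsd t Ht E HE x Hx.
  destruct (classic (exists i, (i < n)%nat /\ x i <> 0)) as [Hnz | Hz].
  - apply (CL_ext n Q _ (flow n A x t)); [intros; apply eq_sym, mvec_expm_flow; assumption|].
    now apply (CL_flow_invariant eta).
  - apply (CL_ext n Q _ (fun _ => 0)); [|apply CL_0].
    intros i Hi. unfold mvec. rewrite rsum_0; [reflexivity|].
    intros k Hk. destruct (Req_dec (x k) 0) as [->|Hxk]; [ring|].
    exfalso. apply Hz. now exists k.
Qed.


Lemma lyap_nonpos_at_CL_boundary x :
  invariant_cont n A (CL n Q (u (n - 1)%nat)) -> CL n Q (u (n - 1)%nat) x -> quad n Q x = 0 ->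
  quad n (lyap_mx n A Q) x <= 0.
Proof.
  intros Hinv Hx Hq0.
  set (f := fun s => quad n Q (flow n A x s)).
  assert (Hf0 : f 0 = quad n Q x) by (apply quad_ext; intros; apply flow_0).
  apply (derive_nonpos_of_right_le f 0).
  - rewrite <- (quad_ext n _ (flow n A x 0) x) by (intros; apply flow_0).
    apply quad_flow_derive.
  - intros h Hh. rewrite Hf0, Hq0, Rplus_0_l.
    destruct (is_expm_exists n A h) as [E HE].
    destruct (Hinv h (Rlt_le _ _ Hh) E HE x Hx) as [Hq _].
    unfold f. rewrite <- (quad_ext n Q (mvec n E x)); [exact Hq|].
    intros; now apply mvec_expm_flow.
Qed.

Lemma lyap_nonpos_on_null_cone :
  invariant_cont n A (CL n Q (u (n - 1)%nat)) ->
  forall x, quad n Q x = 0 -> quad n (lyap_mx n A Q) x <= 0.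
Proof.
  intros Hinv x Hq.
  destruct (Rle_lt_dec (dot n x w) 0) as [Hd | Hd].
  - apply lyap_nonpos_at_CL_boundary; [exact Hinv | split; [lra | exact Hd] | exact Hq].
  - rewrite <- quad_vopp. apply lyap_nonpos_at_CL_boundary; [exact Hinv | | now rewrite quad_vopp].
    split; [rewrite quad_vopp; lra|]. fold w. rewrite dot_vopp_l. lra.
Qed.

Lemma CL_invariant_iff :
  invariant_cont n A (CL n Q (u (n - 1)%nat)) <->
  exists eta, nsd n (madd (lyap_mx n A Q) (mscale (- eta) Q)).
Proof.
  split; [intros Hinv | intros [eta Hnsd]; now apply (CL_invariant_of_nsd eta)].
  pose proof Heig as (_ & _ & _ & Hpos & Hneg).
  assert (Hlast : quad n Q (u (n - 1)%nat) < 0)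
    by (rewrite (quad_eigvec n Q lam u Heig); [exact Hneg | lia]).
  destruct (Nat.eq_dec n 1) as [Hn1 | Hn1].
  - subst n. now apply (nsd_dim1 Q _ (u 0%nat)), Rlt_not_eq.
  - apply (s_lemma n Q _ (u 0%nat) (u (n - 1)%nat)); [| exact Hlast |].
    + rewrite (quad_eigvec n Q lam u Heig) by lia. apply Hpos. lia.
    + now apply lyap_nonpos_on_null_cone.
Qed.

End LorentzCone.

Lemma invariant_cont_vopp n A S :
  invariant_cont n A S -> invariant_cont n A (fun x => S (vopp x)).
Proof.
  intros H t Ht E HE x Hx. rewrite <- mvec_vopp. exact (H t Ht E HE (vopp x) Hx).
Qed.

Lemma vopp_vopp (x : Vec) : vopp (vopp x) = x.
Proof. apply functional_extensionality. intros; unfold vopp; ring. Qed.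

Lemma invariant_cont_vopp_iff n A S :
  invariant_cont n A (fun x => S (vopp x)) <-> invariant_cont n A S.
Proof.
  split; [|apply invariant_cont_vopp].
  intros H%invariant_cont_vopp t Ht E HE x Hx.
  rewrite <- vopp_vopp. apply (H t Ht E HE x). now rewrite vopp_vopp.
Qed.

(* Symmetry and nonsingularity of [Q] are implied by the eigen-decomposition. *)
Theorem theorem3p21 (n : nat) (Q A : Mat) (lam : nat -> R) (u : nat -> Vec) :
  (1 <= n)%nat ->
  symmetric n Q ->
  nonsingular n Q ->
  lorentz_eigen n Q lam u ->
  (invariant_cont n A (CL n Q (u (n - 1)%nat)) <->
     exists eta : R,
       nsd n (madd (madd (mmul n (trmx A) Q) (mmul n Q A)) (mscale (- eta) Q))) /\
  (invariant_cont n A (fun x => CL n Q (u (n - 1)%nat) (vopp x)) <->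
     exists eta : R,
       nsd n (madd (madd (mmul n (trmx A) Q) (mmul n Q A)) (mscale (- eta) Q))).
Proof.
  intros Hn _ _ Heig.
  split; [|rewrite invariant_cont_vopp_iff]; exact (CL_invariant_iff n Q A lam u Hn Heig).
Qed.
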